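(* Let $U\subseteq\mathbb{R}^4$ be open with coordinates $(x^1,x^2,x^3,x^4)$ and let $a,b,p,q,s$ be real constants with $a^2+b^2\neq0$. Consider the Lorentzian metric $$g=2\,dx^1dx^4+(dx^2)^2+(dx^3)^2+\Big(x^4\big(a(x^2)^2+b(x^3)^2\big)+p(x^2)^2+2qx^2x^3+s(x^3)^2\Big)(dx^4)^2$$ on $U$. Then $(U,g)$ belongs to class $\mathcal{B}$, i.e. its Ricci tensor is a Codazzi tensor.
   Context: A pseudo-Riemannian manifold belongs to Gray's class $\mathcal{B}$ if its Ricci tensor $\varrho$ satisfies $(\nabla_X\varrho)(Y,Z)=(\nabla_Y\varrho)(X,Z)$ for all vector fields $X,Y,Z$, where $\nabla$ is the Levi-Civita connection. *)

From Stdlib Require Import Reals Lra.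
From Coquelicot Require Import Coquelicot.
Open Scope R_scope.

(* Points of R^4 are functions nat -> R; only the coordinates 0,1,2,3 are used.
   Paper coordinate x^(i+1) corresponds to index i. *)
Definition pt := nat -> R.

Definition upd (x : pt) (i : nat) (t : R) : pt :=
  fun j => if Nat.eqb j i then t else x j.

Definition pd (f : pt -> R) (i : nat) (x : pt) : R :=
  Derive (fun t => f (upd x i t)) (x i).

Definition sum4 (F : nat -> R) : R := F 0%nat + F 1%nat + F 2%nat + F 3%nat.

Definition kron (i j : nat) : R := if Nat.eqb i j then 1 else 0.

Definition is_open4 (U : pt -> Prop) : Prop :=
  forall x, U x -> exists eps, 0 < eps /\
    forall y, (forall i, (i < 4)%nat -> Rabs (y i - x i) < eps) -> U y.

Definition Fcoef (a b p q s : R) (x : pt) : R :=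
  x 3%nat * (a * (x 1%nat)^2 + b * (x 2%nat)^2)
  + p * (x 1%nat)^2 + 2 * q * x 1%nat * x 2%nat + s * (x 2%nat)^2.

Definition metric (a b p q s : R) (x : pt) (i j : nat) : R :=
  match i, j with
  | O, S (S (S O)) => 1 | S (S (S O)), O => 1
  | S O, S O => 1 | S (S O), S (S O) => 1
  | S (S (S O)), S (S (S O)) => Fcoef a b p q s x
  | _, _ => 0
  end.

Section Geo.
Variables (g ginv : pt -> nat -> nat -> R).

Definition christ (k i j : nat) (x : pt) : R :=
  / 2 * sum4 (fun l => ginv x k l *
     (pd (fun y => g y j l) i x + pd (fun y => g y i l) j x
      - pd (fun y => g y i j) l x)).

Definition ricci (i j : nat) (x : pt) : R :=
  sum4 (fun k => pd (christ k i j) k x - pd (christ k k i) j x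
     + sum4 (fun l => christ k k l x * christ l i j x
                      - christ k j l x * christ l k i x)).

Definition cov_ricci (k i j : nat) (x : pt) : R :=
  pd (ricci i j) k x
  - sum4 (fun l => christ l k i x * ricci l j x)
  - sum4 (fun l => christ l k j x * ricci i l x).
End Geo.

From Stdlib Require Import Reals Lra Lia.
From Coquelicot Require Import Coquelicot.
Open Scope R_scope.

(* The metric is a plane wave g = 2 dx^1 dx^4 + (dx^2)^2 + (dx^3)^2 + F (dx^4)^2.
   Its only Christoffel symbols are built from the first derivatives of F, and
   all their products contracted in the Ricci tensor vanish, so
   rho = -1/2 (F_22 + F_33) dx^4 (x) dx^4 = -((a+b) x^4 + p + s) dx^4 (x) dx^4.
   Because this coefficient is affine in x^4 and every Christoffel symbol with
   an upper index 4 vanishes, nabla rho = -(a+b) dx^4 (x) dx^4 (x) dx^4, which is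
   totally symmetric; in particular rho is a Codazzi tensor. *)

Lemma pd_ext (f h : pt -> R) i x :
  (forall y, f y = h y) -> pd f i x = pd h i x.
Proof. intros Hfh. unfold pd. apply Derive_ext. intros; apply Hfh. Qed.

Lemma pd_loc (U : pt -> Prop) (f h : pt -> R) i x :
  is_open4 U -> (forall y, U y -> f y = h y) -> U x -> pd f i x = pd h i x.
Proof.
  intros HU Hfh Hx. unfold pd. apply Derive_ext_loc.
  destruct (HU x Hx) as [eps [Heps Hball]].
  exists (mkposreal eps Heps). intros t Ht. apply Hfh, Hball.
  intros j _. unfold upd. destruct (Nat.eqb j i) eqn:Eji.
  - apply Nat.eqb_eq in Eji; subst j. exact Ht.
  - rewrite Rminus_diag, Rabs_R0. exact Heps.
Qed.

Lemma pd_scal (c : R) (f : pt -> R) i x :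
  pd (fun y => c * f y) i x = c * pd f i x.
Proof. unfold pd. apply Derive_scal. Qed.

Lemma pd_const (c : R) i x : pd (fun _ => c) i x = 0.
Proof. unfold pd. apply Derive_const. Qed.

Section InverseMetricLocality.
Variables (g ginv ginv' : pt -> nat -> nat -> R) (U : pt -> Prop).
Hypothesis U_open : is_open4 U.
Hypothesis ginv_agree : forall y, U y -> forall k l, (k < 4)%nat -> (l < 4)%nat ->
  ginv y k l = ginv' y k l.

Lemma christ_agree y k i j : U y -> (k < 4)%nat ->
  christ g ginv k i j y = christ g ginv' k i j y.
Proof.
  intros Hy Hk. unfold christ, sum4.
  rewrite !(ginv_agree y Hy k) by lia. reflexivity.
Qed.

Lemma ricci_agree y i j : U y -> ricci g ginv i j y = ricci g ginv' i j y.
Proof.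
  intros Hy. unfold ricci, sum4.
  rewrite !(pd_loc U (christ g ginv _ _ _) (christ g ginv' _ _ _) _ _ U_open)
    by (try exact Hy; intros; apply christ_agree; auto; lia).
  rewrite !(christ_agree y) by (auto; lia). reflexivity.
Qed.

Lemma cov_ricci_agree y k i j : U y ->
  cov_ricci g ginv k i j y = cov_ricci g ginv' k i j y.
Proof.
  intros Hy. unfold cov_ricci, sum4.
  rewrite (pd_loc U (ricci g ginv i j) (ricci g ginv' i j) _ _ U_open)
    by (try exact Hy; intros; apply ricci_agree; auto).
  rewrite !(ricci_agree y), !(christ_agree y) by (auto; lia). reflexivity.
Qed.
End InverseMetricLocality.

Ltac case4 n := destruct n as [|[|[|[|n]]]].

Section PlaneWave.
Variables a b p q s : R.

Definition dx4 (n : nat) : R := match n with 3%nat => 1 | _ => 0 end.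

Definition dFcoef (n : nat) (y : pt) : R :=
  match n with
  | 1%nat => 2 * a * y 3%nat * y 1%nat + 2 * p * y 1%nat + 2 * q * y 2%nat
  | 2%nat => 2 * b * y 3%nat * y 2%nat + 2 * q * y 1%nat + 2 * s * y 2%nat
  | 3%nat => a * (y 1%nat)^2 + b * (y 2%nat)^2
  | _ => 0
  end.

Definition ddFcoef (n m : nat) (y : pt) : R :=
  match n, m with
  | 1%nat, 1%nat => 2 * a * y 3%nat + 2 * p
  | 1%nat, 2%nat | 2%nat, 1%nat => 2 * q
  | 1%nat, 3%nat | 3%nat, 1%nat => 2 * a * y 1%nat
  | 2%nat, 2%nat => 2 * b * y 3%nat + 2 * s
  | 2%nat, 3%nat | 3%nat, 2%nat => 2 * b * y 2%nat
  | _, _ => 0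
  end.

Lemma pd_Fcoef n y : pd (Fcoef a b p q s) n y = dFcoef n y.
Proof.
  case4 n; unfold pd, upd, Fcoef; cbn [Nat.eqb]; apply is_derive_unique;
  auto_derive; auto; unfold dFcoef; ring.
Qed.

Lemma pd_dFcoef n m y : pd (dFcoef n) m y = ddFcoef n m y.
Proof.
  case4 n; case4 m; unfold pd, upd, dFcoef; cbn [Nat.eqb]; apply is_derive_unique;
  auto_derive; auto; unfold ddFcoef; ring.
Qed.

Lemma pd_metric j l i y :
  pd (fun z => metric a b p q s z j l) i y = dx4 j * dx4 l * dFcoef i y.
Proof.
  case4 j; case4 l; cbn [metric dx4];
  first [ rewrite pd_const; ring | rewrite pd_Fcoef; ring ].
Qed.

Definition metric_inv (y : pt) (k l : nat) : R :=
  match k, l with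
  | 0%nat, 0%nat => - Fcoef a b p q s y
  | 0%nat, 3%nat | 3%nat, 0%nat | 1%nat, 1%nat | 2%nat, 2%nat => 1
  | _, _ => 0
  end.

(* Solving the four equations with index i = 0, 1, 2, 3 in turn; the row i = 3
   needs ginv 3 l, which the row i = 0 gives. *)
Lemma inverse_metric_eq (ginv : pt -> nat -> nat -> R) y :
  (forall i j, (i < 4)%nat -> (j < 4)%nat ->
     sum4 (fun k => metric a b p q s y i k * ginv y k j) = kron i j) ->
  forall k l, (k < 4)%nat -> (l < 4)%nat -> ginv y k l = metric_inv y k l.
Proof.
  intros Hinv k l Hk Hl.
  pose proof (Hinv 0%nat l ltac:(lia) Hl) as H0.
  pose proof (Hinv 1%nat l ltac:(lia) Hl) as H1.
  pose proof (Hinv 2%nat l ltac:(lia) Hl) as H2.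
  pose proof (Hinv 3%nat l ltac:(lia) Hl) as H3.
  unfold sum4 in *; cbn [metric] in *.
  assert (E3 : ginv y 3%nat l = kron 0 l) by lra.
  rewrite E3 in H3.
  case4 k; try lia; case4 l; try lia; cbn [metric_inv kron Nat.eqb] in *; lra.
Qed.

Definition christ_pw (k i j : nat) : pt -> R :=
  match k, i, j with
  | 0%nat, 1%nat, 3%nat | 0%nat, 3%nat, 1%nat => fun y => / 2 * dFcoef 1 y
  | 0%nat, 2%nat, 3%nat | 0%nat, 3%nat, 2%nat => fun y => / 2 * dFcoef 2 y
  | 0%nat, 3%nat, 3%nat => fun y => / 2 * dFcoef 3 y
  | 1%nat, 3%nat, 3%nat => fun y => - / 2 * dFcoef 1 y
  | 2%nat, 3%nat, 3%nat => fun y => - / 2 * dFcoef 2 y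
  | _, _, _ => fun _ => 0
  end.

Lemma christ_metric k i j y :
  christ (metric a b p q s) metric_inv k i j y = christ_pw k i j y.
Proof.
  unfold christ, sum4. rewrite !pd_metric.
  case4 k; case4 i; case4 j; cbn [metric_inv dx4 christ_pw dFcoef]; field.
Qed.

Definition ricci_coef (y : pt) : R := - ((a + b) * y 3%nat + p + s).

Lemma ricci_metric i j y :
  ricci (metric a b p q s) metric_inv i j y = ricci_coef y * dx4 i * dx4 j.
Proof.
  unfold ricci, sum4.
  rewrite !(pd_ext (christ _ _ _ _ _) (christ_pw _ _ _)) by apply christ_metric.
  rewrite !christ_metric.
  case4 i; case4 j; cbn [christ_pw dx4]; rewrite ?pd_scal, ?pd_const, ?pd_dFcoef;
  cbn [dFcoef ddFcoef]; unfold ricci_coef; field.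
Qed.

Lemma pd_ricci_coef k y : pd ricci_coef k y = - (a + b) * dx4 k.
Proof.
  case4 k; unfold pd, upd, ricci_coef; cbn [Nat.eqb dx4]; apply is_derive_unique;
  auto_derive; auto; ring.
Qed.

Lemma cov_ricci_metric k i j y :
  cov_ricci (metric a b p q s) metric_inv k i j y
  = - (a + b) * dx4 k * dx4 i * dx4 j.
Proof.
  unfold cov_ricci, sum4.
  rewrite (pd_ext _ (fun z => (ricci_coef z * dx4 i) * dx4 j)) by apply ricci_metric.
  rewrite !ricci_metric, !christ_metric.
  rewrite (pd_ext _ (fun z => (dx4 i * dx4 j) * ricci_coef z)) by (intros; ring).
  rewrite pd_scal, pd_ricci_coef.
  case4 i; case4 j; case4 k; cbn [dx4 christ_pw dFcoef]; ring.
Qed.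
End PlaneWave.

Theorem mainTheorem4 (U : pt -> Prop) (a b p q s : R)
  (ginv : pt -> nat -> nat -> R) :
  is_open4 U ->
  a ^ 2 + b ^ 2 <> 0 ->
  (* ginv is the inverse matrix of the metric at every point of U *)
  (forall x, U x -> forall i j, (i < 4)%nat -> (j < 4)%nat ->
     sum4 (fun k => metric a b p q s x i k * ginv x k j) = kron i j) ->
  (* class B: the Ricci tensor is Codazzi, (nabla_k rho)_{ij} = (nabla_i rho)_{kj} *)
  forall x, U x -> forall i j k, (i < 4)%nat -> (j < 4)%nat -> (k < 4)%nat ->
    cov_ricci (metric a b p q s) ginv k i j x
    = cov_ricci (metric a b p q s) ginv i k j x.
Proof.
  intros HU _ Hinv x Hx i j k _ _ _.
  assert (Hagree : forall y, U y -> forall k l, (k < 4)%nat -> (l < 4)%nat ->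
            ginv y k l = metric_inv a b p q s y k l)
    by (intros y Hy; apply inverse_metric_eq, Hinv, Hy).
  rewrite !(cov_ricci_agree _ _ _ U HU Hagree x) by exact Hx.
  rewrite !cov_ricci_metric. ring.
Qed.
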